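(* Let $(E,\|\cdot\|)$ be an $n$-dimensional normed space over $K$ such that for each subspace $F\subseteq E$ with $\dim E/F=2$ one has $\dim_{K^\vee}(E/F)^\vee=1$. Then all $(n-1)$-dimensional subspaces of $E$ are isometrically isomorphic to each other.
   Context: $K$ is a complete non-archimedean non-trivially valued field which is not spherically complete; $K^\vee$ is a fixed spherically complete immediate extension of $K$. Normed spaces are finite-dimensional non-archimedean normed spaces over $K$; quotients carry the quotient norm $\|\pi(x)\|=\inf_{d\in F}\|x-d\|$. A subset $X\subseteq E\setminus\{0\}$ is orthogonal if $\|\sum\lambda_ix_i\|=\max\|\lambda_ix_i\|$ for finitely many distinct $x_i\in X$, $\lambda_i\in K$; $\dim_{K^\vee}E^\vee$ denotes the cardinality of a maximal orthogonal subset of $E$. *)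

From HB Require Import structures.
From mathcomp Require Import all_boot all_order all_algebra.
From mathcomp Require Import classical_sets boolp reals.
Set Implicit Arguments. Unset Strict Implicit. Unset Printing Implicit Defensive.
Import Order.TTheory GRing.Theory Num.Theory.
Local Open Scope ring_scope.
Local Open Scope classical_set_scope.

Definition nonarch_abs (R : realType) (K : fieldType) (abs : K -> R) : Prop :=
  [/\ forall x, (abs x == 0) = (x == 0),
      forall x, 0 <= abs x,
      forall x y, abs (x * y) = abs x * abs y
    & forall x y, abs (x + y) <= Num.max (abs x) (abs y)].

Definition nontrivial_abs (R : realType) (K : fieldType) (abs : K -> R) : Prop :=
  exists x, abs x != 0 /\ abs x != 1.

Definition complete_abs (R : realType) (K : fieldType) (abs : K -> R) : Prop :=
  forall u : nat -> K,
    (forall e : R, 0 < e -> exists N, forall m k, (N <= m)%N -> (N <= k)%N ->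
        abs (u m - u k) < e) ->
    exists l, forall e : R, 0 < e -> exists N, forall m, (N <= m)%N -> abs (u m - l) < e.

Definition cball (R : realType) (K : fieldType) (abs : K -> R) (p : K * R) : set K :=
  [set x | abs (x - p.1) <= p.2].

Definition spherically_complete (R : realType) (K : fieldType) (abs : K -> R) : Prop :=
  forall S : set (K * R), S !=set0 ->
    (forall p, S p -> 0 < p.2) ->
    (forall p q, S p -> S q -> cball abs p `<=` cball abs q \/ cball abs q `<=` cball abs p) ->
    exists x, forall p, S p -> cball abs p x.

Definition nonarch_norm (R : realType) (K : fieldType) (abs : K -> R)
    (E : lmodType K) (norm : E -> R) : Prop :=
  [/\ forall x, (norm x == 0) = (x == 0),
      forall x, 0 <= norm x,
      forall a x, norm (a *: x) = abs a * norm x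
    & forall x y, norm (x + y) <= Num.max (norm x) (norm y)].

(* Quotient norm on E/F, evaluated on a representative x: inf_{d in F} ||x - d||. *)
Definition qnorm (R : realType) (K : fieldType) (E : vectType K) (norm : E -> R)
    (F : {vspace E}) (x : E) : R :=
  inf [set norm (x - d) | d in [set d : E | d \in F]].

(* The classes in E/F of the (representatives in the) sequence s form an
   orthogonal subset of E/F: the classes are nonzero, pairwise distinct, and
   ||sum lam_i pi(s_i)|| = max ||lam_i pi(s_i)|| for all scalars lam
   (taking lam_i = 0 covers every finite subfamily). *)
Definition quot_orthogonal (R : realType) (K : fieldType) (E : vectType K)
    (norm : E -> R) (F : {vspace E}) (s : seq E) : Prop :=
  [/\ forall i, (i < size s)%N -> s`_i \notin F,
      forall i j, (i < size s)%N -> (j < size s)%N -> i != j -> s`_i - s`_j \notin F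
    & forall lam : nat -> K,
        qnorm norm F (\sum_(i < size s) lam i *: s`_i)
        = \big[Num.max/0]_(i < size s) qnorm norm F (lam i *: s`_i)].

(* dim_{K^vee} (E/F)^vee = d : there is a maximal orthogonal subset of E/F
   of cardinality d (maximal: no further class can be added). *)
Definition quot_dual_dim (R : realType) (K : fieldType) (E : vectType K)
    (norm : E -> R) (F : {vspace E}) (d : nat) : Prop :=
  exists s : seq E,
    [/\ quot_orthogonal norm F s, size s = d
      & forall y, y \notin F -> (forall i, (i < size s)%N -> y - s`_i \notin F) ->
          ~ quot_orthogonal norm F (rcons s y)].

Definition isometric_subspaces (R : realType) (K : fieldType) (E : vectType K)
    (norm : E -> R) (F1 F2 : {vspace E}) : Prop :=
  exists f : E -> E,
    [/\ forall a x y, x \in F1 -> y \in F1 -> f (a *: x + y) = a *: f x + f y,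
        forall x, x \in F1 -> f x \in F2,
        forall x, x \in F1 -> norm (f x) = norm x
      & forall y, y \in F2 -> exists2 x, x \in F1 & f x = y].

(* Let F be a subspace of codimension 2 and s a vector whose class spans a
   maximal orthogonal subset of E/F.  If some hyperplane D over F contained
   no point d with ||s - d|| < ||s - f|| for every f in F, then the class of
   any x in D \ F would be orthogonal to that of s, contradicting maximality.
   Such a "nearer" point d yields a shear x |-> x + c(x)(d - s) of F + Ks onto
   F + Kd = D which fixes F and, by the ultrametric inequality, preserves the
   norm.  Hence every hyperplane containing F is isometric to F + Ks; two
   distinct hyperplanes meet in such an F. *)
From HB Require Import structures.
From mathcomp Require Import all_boot all_order all_algebra.
From mathcomp Require Import classical_sets boolp reals.
From mathcomp Require Import zify.

Set Implicit Arguments.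
Unset Strict Implicit.
Unset Printing Implicit Defensive.
Import Order.TTheory GRing.Theory Num.Theory.
Local Open Scope ring_scope.
Local Open Scope classical_set_scope.

Section NonArchimedeanNorm.
Variables (R : realType) (K : fieldType) (abs : K -> R).
Hypothesis habs : nonarch_abs abs.
Variables (E : vectType K) (norm : E -> R).
Hypothesis hnorm : nonarch_norm abs norm.

Lemma abs_ge0 a : 0 <= abs a.
Proof. by case: habs. Qed.

Lemma abs_gt0 a : a != 0 -> 0 < abs a.
Proof. by case: habs => abs_eq0 _ _ _ a0; rewrite lt_def abs_eq0 a0 abs_ge0. Qed.

Lemma abs1 : abs 1 = 1.
Proof.
case: habs => abs_eq0 _ absM _.
have : abs 1 * abs 1 = 1 * abs 1 by rewrite -absM !mul1r.
by move/mulIf; apply; rewrite abs_eq0 oner_eq0.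
Qed.

Lemma absN1 : abs (-1) = 1.
Proof.
case: habs => _ _ absM _.
have /eqP : abs (-1) ^+ 2 = 1 by rewrite expr2 -absM mulrNN mul1r abs1.
rewrite sqrf_eq1 => /orP[/eqP //| /eqP absN1].
by move: (abs_ge0 (-1)); rewrite absN1 ler0N1.
Qed.

Lemma norm_ge0 x : 0 <= norm x.
Proof. by case: hnorm. Qed.

Lemma norm0 : norm 0 = 0.
Proof. by case: hnorm => norm_eq0 _ _ _; apply/eqP; rewrite norm_eq0. Qed.

Lemma normZ a x : norm (a *: x) = abs a * norm x.
Proof. by case: hnorm. Qed.

Lemma normD_max x y : norm (x + y) <= Num.max (norm x) (norm y).
Proof. by case: hnorm. Qed.

Lemma normN x : norm (- x) = norm x.
Proof. by rewrite -scaleN1r normZ absN1 mul1r. Qed.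

Lemma norm_distC x y : norm (x - y) = norm (y - x).
Proof. by rewrite -normN opprB. Qed.

Lemma normD_eq_l x y : norm y < norm x -> norm (x + y) = norm x.
Proof.
move=> lt_yx; apply/eqP; rewrite eq_le; apply/andP; split.
  by apply: le_trans (normD_max x y) _; rewrite ge_max lexx ltW.
have := normD_max (x + y) (- y); rewrite addrK normN le_max => /orP[// | le_xy].
by move: (lt_le_trans lt_yx le_xy); rewrite ltxx.
Qed.

Lemma norm_lt_of_ltB x y : norm x < norm (y - x) -> norm x < norm y.
Proof. by move=> lt_x; rewrite -(subrK x y) normD_eq_l. Qed.

Section Quotient.
Variable F : {vspace E}.

Let qset v := [set norm (v - d) | d in [set d : E | d \in F]].

Let qset_neq0 v : qset v !=set0.
Proof. by exists (norm (v - 0)); exists 0 => //=; rewrite mem0v. Qed.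

Let qset_lbound v : has_lbound (qset v).
Proof. by exists 0 => _ [d _ <-]; apply: norm_ge0. Qed.

Lemma qnorm_le v f : f \in F -> qnorm norm F v <= norm (v - f).
Proof. by move=> fF; apply: (ge_inf (qset_lbound v)); exists f. Qed.

Lemma qnorm_ge0 v : 0 <= qnorm norm F v.
Proof. by apply: lb_le_inf (qset_neq0 v) _ => _ [d _ <-]; apply: norm_ge0. Qed.

Lemma qnorm_ltP v r : qnorm norm F v < r -> exists2 f, f \in F & norm (v - f) < r.
Proof. by move/(inf_lt (qset_neq0 v)) => [_ [d dF <-] lt_dr]; exists d. Qed.

Lemma qnorm_geP v r : (forall f, f \in F -> r <= norm (v - f)) -> r <= qnorm norm F v.
Proof. by move=> ge_r; apply: lb_le_inf (qset_neq0 v) _ => _ [d dF <-]; apply: ge_r. Qed.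

Lemma qnormD_max v w :
  qnorm norm F (v + w) <= Num.max (qnorm norm F v) (qnorm norm F w).
Proof.
rewrite leNgt gt_max; apply/negP => /andP[/qnorm_ltP[f1 f1F lt1] /qnorm_ltP[f2 f2F lt2]].
have := qnorm_le (v + w) (rpredD f1F f2F); rewrite opprD addrACA => le_q.
by have := le_trans le_q (normD_max _ _); rewrite leNgt gt_max lt1 lt2.
Qed.

Definition nearer_than (u d : E) := forall f, f \in F -> norm (u - d) < norm (u - f).

Lemma nearer_than_notin u d : nearer_than u d -> u \notin F.
Proof. by move=> near; apply/negP => /near; rewrite subrr norm0 ltNge norm_ge0. Qed.

Lemma nearer_than_sym u d : nearer_than u d -> nearer_than d u.
Proof.
move=> near f fF; have lt_du : norm (d - u) < norm (u - f) by rewrite norm_distC near.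
have -> : d - f = (u - f) + (d - u) by rewrite [RHS]addrC addrA subrK.
by rewrite (normD_eq_l lt_du).
Qed.

Lemma qnormZ_le_addZ s x :
    (forall d, d \in (F + <[x]>)%VS -> ~ nearer_than s d) ->
  forall a b, qnorm norm F (a *: s) <= qnorm norm F (a *: s + b *: x).
Proof.
move=> not_near a b; have [->|a0] := eqVneq a 0.
  rewrite scale0r; apply: le_trans (qnorm_ge0 _).
  by apply: le_trans (qnorm_le 0 (mem0v F)) _; rewrite subr0 norm0.
apply: qnorm_geP => f fF; set d := a^-1 *: (f - b *: x).
have dFx : d \in (F + <[x]>)%VS.
  by rewrite /d scalerBr memv_add ?memvZ ?rpredN ?memvZ ?memv_line.
have [f' f'F le_f'] : exists2 f', f' \in F & norm (s - f') <= norm (s - d).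
  apply: contrapT => no_f'; apply: (not_near d dFx) => f'' f''F.
  by rewrite ltNge; apply/negP => le; apply: no_f'; exists f''.
have -> : a *: s + b *: x - f = a *: (s - d).
  by rewrite /d scalerBr scalerA mulfV // scale1r opprB addrA addrAC.
apply: le_trans (qnorm_le _ (memvZ a f'F)) _.
by rewrite -scalerBr !normZ ler_wpM2l ?abs_ge0.
Qed.

Lemma nearer_than_swap_line s x e :
  e \in (F + <[s]>)%VS -> nearer_than x e -> exists2 d, d \in (F + <[x]>)%VS & nearer_than s d.
Proof.
move=> /memv_addP[g gF [_ /vlineP[c ->] ->]] near.
have [c0|c0] := eqVneq c 0.
  by move: (near g gF); rewrite c0 scale0r addr0 ltxx.
exists (c^-1 *: (x - g)).
  by rewrite scalerBr addrC memv_add ?rpredN ?memvZ ?memv_line.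
move=> f fF; set y := s - c^-1 *: (x - g).
(* [x - e = - (c *: y)], so nearness of [e] to [x] rescales to nearness of
   [c^-1 *: (x - g)] to [s]. *)
have ey : x - (g + c *: s) = - (c *: y).
  by rewrite /y scalerBr scalerA mulfV // scale1r opprB opprD addrA.
have fy : x - (g + c *: f) = x - (g + c *: s) + c *: (s - f).
  by rewrite scalerBr !opprD !addrA subrK.
have := near _ (rpredD gF (memvZ c fF)); rewrite fy ey normN addrC.
move/norm_lt_of_ltB; rewrite !normZ => lt_c.
by rewrite -(ltr_pM2l (abs_gt0 c0)).
Qed.

Lemma quot_orthogonal_pair s x :
    s \notin F -> x \notin F -> x - s \notin F ->
    (forall d, d \in (F + <[x]>)%VS -> ~ nearer_than s d) ->
    (forall e, e \in (F + <[s]>)%VS -> ~ nearer_than x e) ->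
  quot_orthogonal norm F [:: s; x].
Proof.
move=> sF xF xsF not_near_s not_near_x; split.
- by case=> [|[|]].
- by case=> [|[|]] [|[|]] //= _ _ _; rewrite -opprB rpredN.
move=> lam; rewrite !big_ord_recl !big_ord0 /= addr0 (@max_l _ _ _ 0) ?qnorm_ge0 //.
apply/eqP; rewrite eq_le qnormD_max ge_max qnormZ_le_addZ //= addrC.
exact: qnormZ_le_addZ.
Qed.

Lemma nearer_than_of_not_orthogonal s x :
    s \notin F -> x \notin F -> x - s \notin F -> ~ quot_orthogonal norm F [:: s; x] ->
  exists2 d, d \in (F + <[x]>)%VS & nearer_than s d.
Proof.
move=> sF xF xsF not_orth; apply: contrapT => no_d; apply: not_orth.
apply: quot_orthogonal_pair => // [d dFx near | e eFs near]; apply: no_d.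
  by exists d.
exact: nearer_than_swap_line eFs near.
Qed.

Section Shear.
Variables u d : E.
Hypothesis near : nearer_than u d.

Let uF : u \notin F := nearer_than_notin near.

Definition line_coord (x : E) : K := xget 0 [set a : K | x - a *: u \in F].

Lemma line_coord_eq x a : x - a *: u \in F -> line_coord x = a.
Proof.
move=> xaF; have xbF : x - line_coord x *: u \in F.
  by apply: (@xgetPex _ 0 [set a : K | x - a *: u \in F]); exists a.
apply/eqP; apply: contraNT uF => ba.
have := memvZ (line_coord x - a)^-1 (rpredB xaF xbF).
by rewrite opprB [_ + (_ - x)]addrC addrA subrK -scalerBl scalerA mulVf ?scale1r // subr_eq0.
Qed.

Lemma line_coordP x : x \in (F + <[u]>)%VS -> x - line_coord x *: u \in F.
Proof.
by move=> /memv_addP[g gF [_ /vlineP[a ->] ->]]; rewrite (@line_coord_eq _ a) addrK.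
Qed.

Definition shear x := x + line_coord x *: (d - u).

Lemma shear_linear a x y : x \in (F + <[u]>)%VS -> y \in (F + <[u]>)%VS ->
  shear (a *: x + y) = a *: shear x + shear y.
Proof.
move=> xFu yFu; rewrite /shear (@line_coord_eq _ (a * line_coord x + line_coord y)).
  by rewrite scalerDl -scalerA [a *: (x + _)]scalerDr addrACA.
rewrite scalerDl -scalerA opprD addrACA -scalerBr.
by rewrite rpredD ?memvZ ?line_coordP.
Qed.

Lemma shear_decomp x : shear x = (x - line_coord x *: u) + line_coord x *: d.
Proof. by rewrite /shear scalerBr addrA addrAC. Qed.

Lemma shear_norm x : x \in (F + <[u]>)%VS -> norm (shear x) = norm x.
Proof.
move=> xFu; rewrite /shear; have [->|c0] := eqVneq (line_coord x) 0.
  by rewrite scale0r addr0.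
apply: normD_eq_l.
set c := line_coord x; set g := x - c *: u.
have -> : x = c *: (u - (- c^-1 *: g)).
  by rewrite scalerBr scalerA mulrN mulfV // scaleN1r opprK /g addrC subrK.
rewrite !normZ norm_distC ltr_pM2l ?abs_gt0 //.
by apply: near; rewrite memvZ ?line_coordP.
Qed.

Lemma isometric_addv_line : isometric_subspaces norm (F + <[u]>)%VS (F + <[d]>)%VS.
Proof.
exists shear; split.
- exact: shear_linear.
- by move=> x xFu; rewrite shear_decomp memv_add ?memvZ ?memv_line ?line_coordP.
- exact: shear_norm.
move=> _ /memv_addP[g gF [_ /vlineP[b ->] ->]].
exists (g + b *: u); first by rewrite memv_add ?memvZ ?memv_line.
by rewrite shear_decomp (@line_coord_eq _ b) ?addrK.
Qed.

End Shear.
End Quotient.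
End NonArchimedeanNorm.

Lemma isometric_subspaces_refl (R : realType) (K : fieldType) (E : vectType K)
  (norm : E -> R) (F : {vspace E}) : isometric_subspaces norm F F.
Proof. by exists id; split => // y yF; exists y. Qed.

Lemma isometric_subspaces_trans (R : realType) (K : fieldType) (E : vectType K)
    (norm : E -> R) (A B C : {vspace E}) :
  isometric_subspaces norm A B -> isometric_subspaces norm B C ->
  isometric_subspaces norm A C.
Proof.
move=> [f [fL fAB fN fS]] [g [gL gBC gN gS]]; exists (g \o f); split => /=.
- by move=> a x y xA yA; rewrite fL // gL // fAB.
- by move=> x xA; apply/gBC/fAB.
- by move=> x xA; rewrite gN ?fN ?fAB.
move=> z zC; have [y yB <-] := gS z zC; have [x xA <-] := fS y yB.
by exists x.
Qed.

Lemma addv_line_eq (K : fieldType) (E : vectType K) (F D : {vspace E}) (y : E) :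
  (F <= D)%VS -> \dim D = (\dim F).+1 -> y \in D -> y \notin F -> (F + <[y]>)%VS = D.
Proof.
move=> FD dimD yD yF; apply/eqP; rewrite eqEdim subv_add FD -memvE yD /= dimD.
rewrite (ltn_leqif (dimv_leqif_sup (addvSl F <[y]>))).
by rewrite subv_add subvv -memvE yF.
Qed.

Lemma dimv_cap_hyperplanes (K : fieldType) (E : vectType K) (F1 F2 : {vspace E}) :
    \dim F1 = (\dim {:E}).-1 -> \dim F2 = (\dim {:E}).-1 -> F1 != F2 ->
  (\dim (F1 :&: F2) + 2)%N = \dim {:E}.
Proof.
move=> dim1 dim2 neq12.
have dim_sum := dimv_sum_cap F1 F2.
have le_sum := dimvS (subvf (F1 + F2)).
have lt_sum : (\dim F1 < \dim (F1 + F2))%N.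
  rewrite (ltn_leqif (dimv_leqif_sup (addvSl F1 F2))) subv_add subvv /=.
  by apply: contra neq12 => F2F1; rewrite eq_sym eqEdim F2F1 dim1 dim2 /=.
by move: dim_sum le_sum lt_sum; rewrite dim1 dim2 -!subn1; lia.
Qed.

Section Hyperplanes.
Variables (R : realType) (K : fieldType) (abs : K -> R).
Hypothesis habs : nonarch_abs abs.
Variables (E : vectType K) (norm : E -> R).
Hypothesis hnorm : nonarch_norm abs norm.

Lemma quot_dual_dim1_maximal (F : {vspace E}) : quot_dual_dim norm F 1 ->
  exists2 s, s \notin F &
    forall y, y \notin F -> y - s \notin F -> ~ quot_orthogonal norm F [:: s; y].
Proof.
move=> [[|s [|? ?]] [orth_s //= _ maximal]]; exists s.
  by case: orth_s => /(_ 0%N erefl).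
by move=> y yF ysF; apply: maximal => // -[].
Qed.

Lemma hyperplane_isometric_line (F D : {vspace E}) s :
    s \notin F ->
    (forall y, y \notin F -> y - s \notin F -> ~ quot_orthogonal norm F [:: s; y]) ->
    (F <= D)%VS -> \dim D = (\dim F).+1 ->
  isometric_subspaces norm (F + <[s]>)%VS D /\ isometric_subspaces norm D (F + <[s]>)%VS.
Proof.
move=> sF maximal FD dimD.
have [x xD xF] : exists2 x, x \in D & x \notin F.
  by apply/subvPn/negP => /dimvS; rewrite dimD ltnn.
have [xsF | xsF] := boolP (x - s \in F).
  have sD : s \in D by rewrite -[s](subKr x) rpredB // (subvP FD).
  by rewrite (addv_line_eq FD dimD sD sF); split; apply: isometric_subspaces_refl.
have [d dFx near] := nearer_than_of_not_orthogonal habs hnorm sF xF xsF (maximal x xF xsF).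
have dD : d \in D by apply: subvP dFx; rewrite subv_add FD -memvE.
have near' := nearer_than_sym habs hnorm near.
rewrite -(addv_line_eq FD dimD dD (nearer_than_notin hnorm near')).
by split; [exact: (isometric_addv_line habs hnorm near) | exact: (isometric_addv_line habs hnorm near')].
Qed.

End Hyperplanes.

Theorem mainTheorem8 (R : realType) (K : fieldType) (abs : K -> R)
    (habs : nonarch_abs abs) (hnt : nontrivial_abs abs)
    (hcomp : complete_abs abs) (hnsc : ~ spherically_complete abs)
    (E : vectType K) (norm : E -> R) (hnorm : nonarch_norm abs norm)
    (n : nat) (hdim : \dim (fullv : {vspace E}) = n)
    (hyp : forall F : {vspace E}, (\dim F + 2)%N = n -> quot_dual_dim norm F 1) :
  forall F1 F2 : {vspace E}, \dim F1 = n.-1 -> \dim F2 = n.-1 ->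
    isometric_subspaces norm F1 F2.
Proof.
move=> F1 F2 dim1 dim2; have [<- | neq12] := eqVneq F1 F2.
  exact: isometric_subspaces_refl.
set F := (F1 :&: F2)%VS.
have dimF : (\dim F + 2)%N = n.
  by rewrite -hdim dimv_cap_hyperplanes // hdim.
have dim_hyperplane (D : {vspace E}) : \dim D = n.-1 -> \dim D = (\dim F).+1.
  by move=> ->; rewrite -dimF addn2.
have [s sF maximal] := quot_dual_dim1_maximal (hyp F dimF).
have [_ iso1] := hyperplane_isometric_line habs hnorm sF maximal (capvSl F1 F2) (dim_hyperplane _ dim1).
have [iso2 _] := hyperplane_isometric_line habs hnorm sF maximal (capvSr F1 F2) (dim_hyperplane _ dim2).
exact: isometric_subspaces_trans iso1 iso2.
Qed.
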